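(* Let $N\ge2$ be an integer and let $\sigma$ be a finite nonempty set of functions $\mathbb{Z}_2\to\mathbb{Z}_N$ that is totally indistinguishable. Then the standard oracle operators $\{U_f: f\in\sigma\}$ are not unambiguously distinguishable.
   Context: A set $\sigma$ of functions $\mathbb{Z}_M\to\mathbb{Z}_N$ is totally indistinguishable if for every $x\in\mathbb{Z}_M$ and every $f\in\sigma$ there exists $f'\in\sigma$ with $f'\neq f$ and $f'(x)=f(x)$. Let $\mathcal{H}_2,\mathcal{H}_N$ be Hilbert spaces with orthonormal bases $\{|x\rangle\}_{x\in\mathbb{Z}_2}$, $\{|y\rangle\}_{y\in\mathbb{Z}_N}$. For $f:\mathbb{Z}_2\to\mathbb{Z}_N$ the standard oracle operator is the unitary $U_f$ on $\mathcal{H}_2\otimes\mathcal{H}_N$ with $U_f|x\rangle\otimes|y\rangle=|x\rangle\otimes|y\oplus f(x)\rangle$, $\oplus$ being addition mod $N$. A finite list of unitary operators $W_1,\ldots,W_K$ on a finite-dimensional Hilbert space $\mathcal{H}$ is called unambiguously distinguishable if there exist a finite-dimensional ancilla space $\mathcal{H}_A$ and a unit vector $|\psi\rangle\in\mathcal{H}\otimes\mathcal{H}_A$ such that the vectors $(W_j\otimes\mathbb{1}_A)|\psi\rangle$ are linearly independent. *)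

From HB Require Import structures.
From mathcomp Require Import all_boot all_order all_algebra.
From mathcomp Require Import mxtens.
Set Implicit Arguments. Unset Strict Implicit. Unset Printing Implicit Defensive.
Import Order.TTheory GRing.Theory Num.Theory.
Local Open Scope ring_scope.

Lemma addmod_proof (N : nat) (y v : 'I_N) : ((y + v) %% N < N)%N.
Proof. by rewrite ltn_pmod // (leq_ltn_trans (leq0n y) (ltn_ord y)). Qed.

Definition addmod (N : nat) (y v : 'I_N) : 'I_N := Ordinal (addmod_proof y v).

Definition totally_indist (M N : nat) (s : {set {ffun 'I_M -> 'I_N}}) : Prop :=
  forall (x : 'I_M) (f : {ffun 'I_M -> 'I_N}), f \in s ->
    exists2 f' : {ffun 'I_M -> 'I_N}, f' \in s & f' != f /\ f' x = f x.

(* Standard oracle U_f on H_2 (x) H_N, in the basis |x> (x) |y> indexed by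
   mxtens_index (x, y) : 'I_(2 * N).  Column |x,y> is mapped to |x, y (+) f x>. *)
Definition oracle (C : numClosedFieldType) (N : nat) (f : {ffun 'I_2 -> 'I_N})
  : 'M[C]_(2 * N) :=
  \matrix_(i, j) (i == mxtens_index ((mxtens_unindex j).1,
                        addmod (mxtens_unindex j).2 (f (mxtens_unindex j).1)))%:R.

Definition unit_vector (C : numClosedFieldType) (n : nat) (v : 'cV[C]_n) : Prop :=
  \sum_(i < n) `|v i 0| ^+ 2 = 1.

Definition lin_indep_on (C : numClosedFieldType) (T : finType) (n : nat)
  (S : {set T}) (v : T -> 'cV[C]_n) : Prop :=
  forall c : T -> C, \sum_(t in S) c t *: v t = 0 -> forall t, t \in S -> c t = 0.

(* The operators (W t)_{t in S} on H = C^n are unambiguously distinguishable: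
   there is a finite-dimensional ancilla C^d and a unit vector psi in
   H (x) C^d such that the vectors (W t (x) 1) psi are linearly independent. *)
Definition unamb_dist (C : numClosedFieldType) (T : finType) (n : nat)
  (S : {set T}) (W : T -> 'M[C]_n) : Prop :=
  exists (d : nat) (psi : 'cV[C]_(n * d)),
    unit_vector psi /\
    lin_indep_on S (fun t => (W t *t (1%:M : 'M[C]_d)) *m psi).

(* The oracle U_f splits as L_(f 0) + R_(f 1), where L_a acts on the |0> block and
   R_b on the |1> block, so (U_f (x) 1) psi = l_(f 0) + r_(f 1) for fixed vectors
   l_a, r_b.  Fixing a0 = f0 0 with f0 in sigma, every such vector is
   (l_(f 0) - l_a0) + (l_a0 + r_(f 1)), hence lies in a space spanned by
   |A| - 1 + |B| vectors, where A and B are the images of sigma under evaluation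
   at 0 and 1.  Total indistinguishability makes every fibre of both evaluations
   have at least two elements, so |A| + |B| <= |sigma| and the |sigma| vectors
   cannot be independent. *)

From HB Require Import structures.
From mathcomp Require Import all_boot all_order all_algebra.
From mathcomp Require Import mxtens.
Set Implicit Arguments. Unset Strict Implicit. Unset Printing Implicit Defensive.
Import GRing.Theory.
Local Open Scope ring_scope.

Lemma totally_indist_card_imset (M N : nat) (s : {set {ffun 'I_M -> 'I_N}})
    (x : 'I_M) :
  totally_indist s -> (2 * #|[set f x | f : {ffun 'I_M -> 'I_N} in s]| <= #|s|)%N.
Proof.
move=> indist; rewrite -[#|s|]sum1_card.
rewrite (partition_big_imset (fun f : {ffun 'I_M -> 'I_N} => f x)) /= mulnC.
rewrite -sum_nat_const; apply: leq_sum => _ /imsetP[f sf ->].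
have [f' sf' [f'_neq f'_x]] := indist x f sf.
have pair_sub : [set f; f'] \subset [pred g in s | g x == f x].
  by apply/subsetP => g; rewrite !inE => /orP[] /eqP ->; rewrite ?sf ?sf' ?f'_x /=.
by rewrite sum1_card (leq_trans _ (subset_leq_card pair_sub)) // cards2 eq_sym f'_neq.
Qed.

Lemma tensmxDl (R : pzRingType) m n p q (A B : 'M[R]_(m, n)) (D : 'M[R]_(p, q)) :
  (A + B) *t D = A *t D + B *t D.
Proof. by apply/matrixP => i j; rewrite !mxE mulrDl. Qed.

Lemma mxrank_sumsmx_rows_le (F : fieldType) (I : finType) (A : {set I}) n
    (v : I -> 'rV[F]_n) :
  (\rank (\sum_(i in A) <<v i>>)%MS <= #|A|)%N.
Proof.
apply: leq_trans (mxrank_sum_leqif _) _.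
by rewrite -sum1_card leq_sum // => i _; rewrite /= mxrank_gen rank_leq_row.
Qed.

Section LinearIndependence.

Variables (C : numClosedFieldType) (T : finType) (n : nat).
Implicit Types (S : {set T}) (v w : T -> 'cV[C]_n).

Lemma eq_lin_indep_on S v w : v =1 w -> lin_indep_on S v -> lin_indep_on S w.
Proof.
move=> vw indep c sum0; apply: indep.
by under eq_bigr => t _ do rewrite vw.
Qed.

Lemma lin_indep_on_card_le_rank S v m (U : 'M[C]_(m, n)) :
  lin_indep_on S v -> (forall t, t \in S -> ((v t)^T <= U)%MS) ->
  (#|S| <= \rank U)%N.
Proof.
move=> indep vU; pose Y := \matrix_(i < #|S|) (v (enum_val i))^T.
have freeY : row_free Y.
  apply: inj_row_free => c cY0; apply/rowP => i; rewrite mxE.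
  pose c' t := c 0 (enum_rank_in (enum_valP i) t).
  have sum0 : \sum_(t in S) c' t *: v t = 0.
    rewrite big_enum_val /=; apply: trmx_inj; rewrite trmx0 -cY0 mulmx_sum_row.
    rewrite linear_sum; apply: eq_bigr => k _.
    by rewrite /c' enum_valK_in linearZ rowK.
  by have := indep c' sum0 _ (enum_valP i); rewrite /c' enum_valK_in.
have YU : (Y <= U)%MS by apply/row_subP => i; rewrite rowK vU ?enum_valP.
by rewrite (leq_trans _ (mxrankS YU)) // row_leq_rank.
Qed.

Lemma lin_indep_on_sum_card (I J : finType) S (g : T -> I) (h : T -> J)
    (l : I -> 'cV[C]_n) (r : J -> 'cV[C]_n) t0 :
  t0 \in S -> lin_indep_on S (fun t => l (g t) + r (h t)) ->
  (#|S| < #|g @: S| + #|h @: S|)%N.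
Proof.
move=> St0 indep; set a0 := g t0.
pose U := ((\sum_(a in g @: S :\ a0) <<(l a - l a0)^T>>) +
           (\sum_(b in h @: S) <<(l a0 + r b)^T>>))%MS.
have rankU : (\rank U < #|g @: S| + #|h @: S|)%N.
  rewrite (cardsD1 a0 (g @: S)) imset_f // add1n addSn ltnS.
  apply: leq_trans (mxrank_adds_leqif _ _).1 _.
  by rewrite leq_add ?mxrank_sumsmx_rows_le.
apply: leq_ltn_trans rankU; apply: lin_indep_on_card_le_rank indep _ => t St.
rewrite -[l (g t)](subrK (l a0)) -addrA linearD /=; apply: addmx_sub_adds.
  have [->|ga0] := eqVneq (g t) a0; first by rewrite subrr trmx0 sub0mx.
  by apply: (sumsmx_sup (g t)); rewrite ?genmxE // !inE ga0 imset_f.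
by apply: (sumsmx_sup (h t)); rewrite ?genmxE // imset_f.
Qed.

End LinearIndependence.

Definition oracle_on (C : numClosedFieldType) (N : nat) (x : 'I_2) (a : 'I_N)
  : 'M[C]_(2 * N) :=
  \matrix_(i, j) (((mxtens_unindex j).1 == x) &&
                  (i == mxtens_index (x, addmod (mxtens_unindex j).2 a)))%:R.

Lemma oracle_split (C : numClosedFieldType) (N : nat) (f : {ffun 'I_2 -> 'I_N}) :
  oracle C f = oracle_on C 0 (f 0) + oracle_on C 1 (f 1).
Proof.
apply/matrixP => i j; rewrite !mxE; case: (mxtens_unindex j) => x y /=.
have [->|->] : x = 0 \/ x = 1.
  by case: x => [[|[|]]] // ?; [left|right]; apply: val_inj.
- by rewrite eqxx andFb addr0.
- by rewrite eqxx andFb add0r.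
Qed.

Theorem theorem5 (C : numClosedFieldType) (N : nat) (hN : (2 <= N)%N)
  (sigma : {set {ffun 'I_2 -> 'I_N}}) (hne : sigma != set0)
  (hti : totally_indist sigma) :
  ~ unamb_dist sigma (fun f => oracle C f).
Proof.
move=> [d [psi [_ indep]]]; case/set0Pn: hne => f0 sf0.
pose l a := (oracle_on C 0 a *t (1%:M : 'M[C]_d)) *m psi.
pose r b := (oracle_on C 1 b *t (1%:M : 'M[C]_d)) *m psi.
have indep_split : lin_indep_on sigma (fun f => l (f 0) + r (f 1)).
  by apply: eq_lin_indep_on indep => f; rewrite oracle_split tensmxDl mulmxDl.
apply/negP: (lin_indep_on_sum_card sf0 indep_split).
rewrite -leqNgt -(leq_pmul2l (isT : 0 < 2)%N) mulnDr.
have card_imsets_le := leq_add (totally_indist_card_imset 0 hti) (totally_indist_card_imset 1 hti).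
by rewrite (leq_trans card_imsets_le) // addnn mul2n.
Qed.
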